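(* Let $p \geq 6$ and $q \geq 3$ be integers and let $L$ be the Laplacian of the graph $K_p \oplus C_q$. Let $E_K$ be the span of the vectors $e_{-1}-e_{-k}$, $k=2,\ldots,p-1$ (equivalently, the vectors supported on $\{-p+1,\ldots,-1\}$ whose entries sum to $0$), and $E_K^\perp$ its orthogonal complement. For $\lambda > 4$ set $\sigma_+(\lambda) = \tfrac12[(2-\lambda) + \sqrt{(2-\lambda)^2-4}]$ and $$F_q(\lambda) = (1-\lambda)\,\sigma_+\,\frac{1+\sigma_+^{2q-3}}{1+\sigma_+^{2q-1}} - (p-\lambda)(1-\lambda) + (p-1), \quad \sigma_+ = \sigma_+(\lambda).$$ Then $\lambda > 4$ is an eigenvalue of $L$ with a corresponding eigenvector $v \in E_K^\perp$ if and only if $F_q(\lambda) = 0$. Furthermore, $F_q(\lambda) = 0$ has exactly one solution in $(p,p+2]$ and no solutions in $(4,p] \cup (p+2,+\infty)$.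
   Context: For integers $p \geq 3$, $q \geq 2$, the graph $K_p \oplus C_q$ has vertex set $\{-p+1,\ldots,0\} \cup \{1,\ldots,q-1\}$. Its edges are: every pair of distinct vertices in $\{-p+1,\ldots,0\}$, the edge $\{0,1\}$, and the edges $\{j,j+1\}$ for $1 \leq j \leq q-2$. The Laplacian $L$ is the matrix with $L_{ii}$ equal to the degree of vertex $i$, $L_{ij}=-1$ if $i\neq j$ are adjacent and $0$ otherwise. Vectors are real functions on the vertex set with the standard inner product; $e_j$ is the indicator vector of vertex $j$. *)

From HB Require Import structures.
From mathcomp Require Import all_boot all_order all_algebra.
From mathcomp Require Import reals.
Set Implicit Arguments. Unset Strict Implicit. Unset Printing Implicit Defensive.
Import Order.TTheory GRing.Theory Num.Theory.
Local Open Scope ring_scope.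

(* The graph K_p (+) C_q has p + q - 1 vertices.  The ordinal i : 'I_(p+q-1)
   represents the vertex with integer label  i - (p - 1), so that the labels
   range over {-p+1, ..., 0} U {1, ..., q-1}. *)
Definition nv (p q : nat) : nat := (p + q - 1)%N.

Definition vtx (p q : nat) (i : 'I_(nv p q)) : int := (i%:Z - (p - 1)%:Z)%R.

Definition adj_lab (q : nat) (x y : int) : bool :=
  (x != y) &&
  [|| (x <= 0) && (y <= 0),
      (x == 0) && (y == 1),
      (x == 1) && (y == 0),
      [&& 1 <= x, y == x + 1 & y <= (q - 1)%:Z]
    | [&& 1 <= y, x == y + 1 & x <= (q - 1)%:Z] ].

Definition adj (p q : nat) (i j : 'I_(nv p q)) : bool :=
  adj_lab q (vtx i) (vtx j).

Definition deg (p q : nat) (i : 'I_(nv p q)) : nat := #|[set j | adj i j]|.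

Definition laplacian (R : ringType) (p q : nat) : 'M[R]_(nv p q) :=
  \matrix_(i, j) (if i == j then (deg i)%:R
                  else if adj i j then -1 else 0).

Definition evec (R : ringType) (p q : nat) (j : int) : 'rV[R]_(nv p q) :=
  \row_i (if vtx i == j then 1 else 0).

(* E_K : the matrix whose rows are e_{-1} - e_{-k}, k = 2, ..., p-1
   (row index m : 'I_(p-2) corresponds to k = m + 2). *)
Definition EK (R : ringType) (p q : nat) : 'M[R]_((p - 2)%N, nv p q) :=
  \matrix_(m < (p - 2)%N, j < nv p q)
     (evec R p q (-1) - evec R p q (- (m.+2)%:Z)) 0 j.

Definition in_EKperp (R : fieldType) (p q : nat) (v : 'cV[R]_(nv p q)) : Prop :=
  forall u : 'rV[R]_(nv p q), (u <= EK R p q)%MS -> u *m v = 0.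

Definition sigma_plus (R : rcfType) (l : R) : R :=
  ((2 - l) + Num.sqrt ((2 - l) ^+ 2 - 4)) / 2.

Definition Fq (R : rcfType) (p q : nat) (l : R) : R :=
  let s := sigma_plus l in
  (1 - l) * s * ((1 + s ^+ (2 * q - 3)) / (1 + s ^+ (2 * q - 1)))
  - (p%:R - l) * (1 - l) + (p%:R - 1).

From mathcomp Require Import all_boot all_order all_algebra.
From mathcomp Require Import all_classical all_reals all_analysis.
From mathcomp Require Import lra ring zify.
Import Order.TTheory GRing.Theory Num.Theory.
Import numFieldNormedType.Exports.
Local Open Scope ring_scope.

(* For l > 4 let x_k = cfrac k l be the continued fraction 1 / (2 - l - 1 / (2 - l - ...)).
   An eigenvector orthogonal to E_K takes one value a on the clique vertices -p+1, ..., -1;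
   along the path it is determined by its value d at the free end through the three-term
   recurrence pathpol, whose consecutive ratios are the x_k.  The equation at a clique vertex
   gives b = (1 - l) a at vertex 0, and the equation at vertex 0 then reads a F(l) = 0, where F
   is Fq written with x_(q-1) (its closed form comes from the roots sigma_+ and 1 / sigma_+ of
   X^2 - (2 - l) X + 1).  As a = 0 forces b = d = 0 and hence v = 0, the eigenvalues are the
   roots of F.  A root satisfies (l - 1) (l - p + x_(q-1)) = p - 1 with -1 < x_(q-1) < 0
   nondecreasing in l: this makes F positive on (4, p], negative on [p + 2, +oo) and gives
   at most one root; the intermediate value theorem provides one in (p, p + 2]. *)

(* [pathpol l k] is the entry, [k] steps from the free end of the path, of an
   [l]-eigenvector normalised to [1] at that end. *)
Fixpoint pathpol {R : pzRingType} (l : R) k : R :=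
  match k with
  | 0 => 1
  | 1 => 1 - l
  | (k'.+1 as k1).+1 => (2 - l) * pathpol l k1 - pathpol l k'
  end.

Lemma pathpolSS {R : pzRingType} (l : R) k :
  pathpol l k.+2 = (2 - l) * pathpol l k.+1 - pathpol l k.
Proof. by []. Qed.

Section ContinuedFraction.
Context {R : realFieldType}.
Implicit Types (l : R) (p q k : nat).

Fixpoint cfrac k l : R := if k is k'.+1 then (2 - l - cfrac k' l)^-1 else 1.

Lemma cfrac_bound k l : 4 < l -> -1 < cfrac k l <= 1.
Proof.
move=> hl; elim: k => [|k /andP[lb ub]] /=; first lra.
have hD : 2 - l - cfrac k l < -1 by lra.
apply/andP; split.
  by rewrite -(opprK (_^-1)) -invrN ltrN2 invf_lt1; lra.
by rewrite ltW // (@lt_trans _ _ 0) // invr_lt0; lra.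
Qed.

Lemma cfrac_lt0 k l : 4 < l -> (0 < k)%N -> cfrac k l < 0.
Proof.
move=> hl; case: k => // k _ /=; have /andP[lb ub] := cfrac_bound k l hl.
by rewrite invr_lt0; lra.
Qed.

Lemma cfrac_le k l1 l2 : 4 < l1 -> l1 <= l2 -> cfrac k l1 <= cfrac k l2.
Proof.
move=> hl1 l12; elim: k => [|k IH] //=.
have /andP[a1 _] := cfrac_bound k _ hl1.
have /andP[a2 _] := cfrac_bound k _ (lt_le_trans hl1 l12).
by rewrite lef_nV2 ?negrE; lra.
Qed.

Lemma pathpol_cfrac k l : 4 < l ->
  pathpol l k.+1 != 0 /\ pathpol l k = cfrac k.+1 l * pathpol l k.+1.
Proof.
move=> hl; elim: k => [|k [IH1 IH2]].
  have n1 : 1 - l != 0 by rewrite ltr0_neq0 //; lra.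
  by rewrite /= [2 - l - 1](_ : _ = 1 - l) ?mulVf //; ring.
have /andP[lb ub] := cfrac_bound k.+1 _ hl.
set D := 2 - l - cfrac k.+1 l.
have D_neq0 : D != 0 by rewrite /D ltr0_neq0 //; lra.
have E : pathpol l k.+2 = D * pathpol l k.+1 by rewrite pathpolSS IH2 /D; ring.
by rewrite E mulf_neq0 //; split=> //; rewrite mulrA -[cfrac k.+2 l]/D^-1 mulVf ?mul1r.
Qed.

Definition Fcf p q l : R :=
  (1 - l) * cfrac (q - 1) l - (p%:R - l) * (1 - l) + (p%:R - 1).

Lemma Fcf_gt0 p q l : (2 <= q)%N -> 4 < l <= p%:R -> 0 < Fcf p q l.
Proof.
move=> hq /andP[hl lp]; have q1 : (0 < q - 1)%N by lia.
have := cfrac_lt0 (q - 1) l hl q1.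
rewrite /Fcf; set x := cfrac _ _ => hx.
have : 0 < (l - 1) * (p%:R - l - x) by apply: mulr_gt0; lra.
lra.
Qed.

Lemma Fcf_lt0 p q l : (3 <= p)%N -> p%:R + 2 <= l -> Fcf p q l < 0.
Proof.
move=> hp lp; have p3 : 3 <= p%:R :> R by rewrite (ler_nat R 3).
have hl : 4 < l by lra.
have /andP[lb _] := cfrac_bound (q - 1) l hl.
rewrite /Fcf; move: lb; set x := cfrac _ _ => lb.
have : (l - 1) * 1 < (l - 1) * (l - p%:R + x) by rewrite ltr_pM2l; lra.
lra.
Qed.

Lemma Fcf_root_unique p q l1 l2 : (2 <= p)%N -> 4 < l1 -> 4 < l2 ->
  Fcf p q l1 = 0 -> Fcf p q l2 = 0 -> l1 = l2.
Proof.
move=> hp; have p2 : 2 <= p%:R :> R by rewrite (ler_nat R 2).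
wlog l12 : l1 l2 / l1 <= l2.
  move=> W h1 h2 r1 r2; have [/W|/ltW/W] := lerP l1 l2; first exact.
  by move=> /(_ h2 h1 r2 r1).
move=> h1 h2; have := @cfrac_le (q - 1) _ _ h1 l12; rewrite /Fcf.
set x1 := cfrac _ l1; set x2 := cfrac _ l2 => x12 r1 r2.
have E1 : (l1 - 1) * (l1 - p%:R + x1) = p%:R - 1 by lra.
have E2 : (l2 - 1) * (l2 - p%:R + x2) = p%:R - 1 by lra.
have A1 : 0 < l1 - p%:R + x1.
  rewrite ltNge; apply/negP => hA.
  have : (l1 - 1) * (l1 - p%:R + x1) <= 0 by rewrite pmulr_rle0 //; lra.
  lra.
apply/le_anti; rewrite l12 /= leNgt; apply/negP => l21.
have : (l1 - 1) * (l1 - p%:R + x1) < (l2 - 1) * (l2 - p%:R + x2).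
  apply: (@lt_le_trans _ _ ((l2 - 1) * (l1 - p%:R + x1))).
    by rewrite ltr_pM2r //; lra.
  by rewrite ler_pM2l //; lra.
lra.
Qed.

End ContinuedFraction.

Section SigmaPlus.
Context {R : rcfType}.

Lemma sigma_plusP (l : R) : 4 < l ->
  let s := sigma_plus l in [/\ -1 < s, s < 0 & l = 2 - s - s^-1].
Proof.
move=> hl s; have hD : 0 <= (2 - l) ^+ 2 - 4 by nra.
have r2 := sqr_sqrtr hD; have r0 := sqrtr_ge0 ((2 - l) ^+ 2 - 4).
move: r2 r0; set r := Num.sqrt _ => r2 r0.
have hs : s = ((2 - l) + r) / 2 by [].
have r_lt : r < l - 2 by nra.
have r_gt : l - 4 < r by nra.
have s_lt0 : s < 0 by rewrite hs; lra.
split=> //; first by rewrite hs; lra.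
have s_neq0 : s != 0 by rewrite ltr0_neq0.
have root_s : s ^+ 2 - (2 - l) * s + 1 = 0 by rewrite hs; nra.
apply/eqP; rewrite -subr_eq0; apply/eqP.
have -> : l - (2 - s - s^-1) = (s ^+ 2 - (2 - l) * s + 1) / s by field.
by rewrite root_s mul0r.
Qed.

Lemma add1_expr_gt0 (s : R) n : -1 < s < 0 -> 0 < 1 + s ^+ n.
Proof.
move=> /andP[s_gt s_lt]; case: n => [|n]; first by rewrite expr0; lra.
have : `|s ^+ n.+1| < 1 by rewrite normrX exprn_ilt1 // ltr0_norm //; lra.
by rewrite ltr_norml => /andP[+ _]; lra.
Qed.

Lemma cfrac_sigma_plus (l : R) k : 4 < l ->
  let s := sigma_plus l in
  cfrac k.+1 l = s * (1 + s ^+ (2 * k + 1)) / (1 + s ^+ (2 * k + 3)).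
Proof.
move=> hl s; have [s_gt s_lt hls] := sigma_plusP l hl; rewrite -/s in s_gt s_lt hls.
have s_neq0 : s != 0 by rewrite ltr0_neq0.
have den_neq0 n : 1 + s ^+ n != 0.
  by rewrite gt_eqF // add1_expr_gt0 // s_gt s_lt.
elim: k => [|k IH].
  have -> : 1 + s ^+ 3 = (1 + s) * (s ^+ 2 - s + 1) by ring.
  have f1 : 1 + s != 0 by rewrite gt_eqF //; lra.
  have f2 : s ^+ 2 - s + 1 != 0 by rewrite gt_eqF //; nra.
  by rewrite /= hls; field; rewrite f1 f2 s_neq0.
rewrite -[cfrac k.+2 l]/((2 - l - cfrac k.+1 l)^-1) IH -[RHS]invrK.
set S := s ^+ (2 * k + 1).
have eS n : s ^+ (2 * k + 1 + n) = S * s ^+ n by rewrite exprD.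
have -> : (2 * k + 3 = 2 * k + 1 + 2)%N by lia.
have -> : (2 * k.+1 + 1 = 2 * k + 1 + 2)%N by lia.
have -> : (2 * k.+1 + 3 = 2 * k + 1 + 4)%N by lia.
rewrite !eS hls.
have := den_neq0 (2 * k + 1 + 2)%N; have := den_neq0 (2 * k + 1 + 4)%N; rewrite !eS => d4 d2.
by congr (_^-1); field; rewrite d2 d4 s_neq0.
Qed.

Lemma Fq_Fcf (l : R) p q : (2 <= q)%N -> 4 < l -> Fq p q l = Fcf p q l.
Proof.
move=> hq hl; rewrite /Fq /Fcf.
have -> : (q - 1 = (q - 2).+1)%N by lia.
have -> : (2 * q - 3 = 2 * (q - 2) + 1)%N by lia.
have -> : (2 * q - 1 = 2 * (q - 2) + 3)%N by lia.
by rewrite cfrac_sigma_plus // !mulrA.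
Qed.

End SigmaPlus.

(* Adjacency on indices [i = label + p - 1]: the clique is [0, ..., p - 1] and the path runs
   [p - 1, p, ..., nv p q - 1]. *)
Definition adjn (p a b : nat) : bool :=
  [&& a != b & [|| (a <= p - 1) && (b <= p - 1),
                    (p - 1 <= a) && (b == a.+1) | (p - 1 <= b) && (a == b.+1)]]%N.

Lemma adjE p q (i j : 'I_(nv p q)) : (1 <= p)%N -> adj i j = adjn p i j.
Proof.
move=> hp; have := ltn_ord i; have := ltn_ord j.
rewrite /adj /adj_lab /vtx /adjn /nv; move: (i : nat) (j : nat) => a b; lia.
Qed.

(* Column vectors read as functions on nat (zero out of range), so that index arithmetic
   stays in nat. *)
Definition cvfun {R : nzRingType} {n} (v : 'cV[R]_n) (j : nat) : R :=
  if insub j is Some i then v i 0 else 0.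

Lemma cvfunE {R : nzRingType} {n} (v : 'cV[R]_n) (i : 'I_n) : cvfun v i = v i 0.
Proof. by rewrite /cvfun valK. Qed.

Lemma cvfun_col {R : nzRingType} {n} (f : nat -> R) j : (j < n)%N ->
  cvfun (\col_(i < n) f i) j = f j.
Proof. by move=> hj; rewrite /cvfun insubT mxE. Qed.

Lemma cvfun_eq0P {R : nzRingType} {n} (v : 'cV[R]_n) :
  v = 0 <-> forall j, (j < n)%N -> cvfun v j = 0.
Proof.
split=> [-> j hj|v0]; first by rewrite /cvfun insubT mxE.
by apply/matrixP => i k; rewrite ord1 mxE -cvfunE v0.
Qed.

Lemma sum_nat_eq1 {R : nzRingType} m n c (g : nat -> R) : (m <= c < n)%N ->
  \sum_(m <= j < n) (if j == c then g j else 0) = g c.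
Proof. by move=> hc; rewrite -big_mkcond big_nat1_eq hc. Qed.

Section Laplacian.
Context {R : nzRingType}.
Variables (p q : nat).
Hypotheses (hp : (1 <= p)%N) (hq : (2 <= q)%N).

Definition lapf (f : nat -> R) (a : nat) : R :=
  \sum_(0 <= j < nv p q) (if adjn p a j then f a - f j else 0).

Lemma laplacian_mulmx (v : 'cV[R]_(nv p q)) (i : 'I_(nv p q)) :
  (laplacian R p q *m v) i 0 = lapf (cvfun v) i.
Proof.
have adjii : adj i i = false by rewrite adjE // /adjn eqxx.
rewrite /lapf big_mkord !mxE.
have -> : \sum_j laplacian R p q i j * v j 0 =
    \sum_j ((if j == i then (deg i)%:R * v i 0 else 0) + (if adj i j then - v j 0 else 0)).
  apply: eq_bigr => j _; rewrite mxE.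
  case: (eqVneq j i) => [->|ne]; first by rewrite adjii addr0.
  by rewrite add0r; case: (adj i j); rewrite ?mulN1r ?mul0r.
rewrite big_split /= -big_mkcond big_pred1_eq.
have -> : \sum_(j < nv p q) (if adjn p i j then cvfun v i - cvfun v j else 0) =
    \sum_j ((if adj i j then v i 0 else 0) + (if adj i j then - v j 0 else 0)).
  by apply: eq_bigr => j _; rewrite -adjE // !cvfunE; case: (adj i j); rewrite ?addr0.
rewrite big_split /= -!big_mkcond sumr_const mulr_natl /deg.
by congr (_ *+ _ + _); apply: eq_card => j; rewrite inE.
Qed.

Lemma lapf_seq (f : nat -> R) a (s : seq nat) : uniq s ->
  (forall j, (j \in s) = adjn p a j && (j < nv p q)%N) ->
  lapf f a = \sum_(j <- s) (f a - f j).
Proof.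
move=> s_uniq s_adj; rewrite /lapf -big_mkcond -big_filter; apply: perm_big.
apply: uniq_perm => [|//|j]; first by rewrite filter_uniq ?iota_uniq.
by rewrite mem_filter mem_index_iota s_adj.
Qed.

Section CliqueConstant.
Variable f : nat -> R.
Hypothesis (f_clique : forall j, (j < p - 1)%N -> f j = f 0%N).

Lemma lapf_clique a : (a < p - 1)%N -> lapf f a = f 0%N - f (p - 1)%N.
Proof.
move=> ha; rewrite (@lapf_seq f a (rcons [seq j <- index_iota 0 (p - 1) | j != a] (p - 1)))%N.
- rewrite big_rcons /= big1_seq ?add0r ?(f_clique _ ha) // => j.
  by rewrite mem_filter mem_index_iota => /and3P[_ _ hj]; rewrite !f_clique ?subrr.
- by rewrite rcons_uniq filter_uniq ?iota_uniq // mem_filter mem_index_iota; lia.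
- by move=> j; rewrite mem_rcons inE mem_filter mem_index_iota /adjn /nv; lia.
Qed.

Lemma lapf_junction :
  lapf f (p - 1) = (f (p - 1)%N - f 0%N) *+ (p - 1) + (f (p - 1)%N - f p).
Proof.
rewrite (@lapf_seq f (p - 1) (rcons (index_iota 0 (p - 1)) p))%N.
- rewrite big_rcons /= -[X in _ *+ X](subn0 (p - 1)%N) -sumr_const_nat.
  congr (_ + _); apply: eq_big_seq => j.
  by rewrite mem_index_iota => /andP[_ hj]; rewrite (f_clique j hj).
- by rewrite rcons_uniq iota_uniq mem_index_iota andbT; lia.
- by move=> j; rewrite mem_rcons inE mem_index_iota /adjn /nv; lia.
Qed.

End CliqueConstant.

Lemma lapf_path (f : nat -> R) a : (p <= a)%N -> (a.+1 < nv p q)%N ->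
  lapf f a = (f a - f a.-1) + (f a - f a.+1).
Proof.
move=> h1 h2; rewrite (@lapf_seq f a [:: a.-1; a.+1]).
- by rewrite !big_cons big_nil addr0.
- by rewrite /= inE andbT neq_ltn ltnS leq_pred.
- by move=> j; move: h2; rewrite !inE -!subn1 /adjn /nv; lia.
Qed.

Lemma lapf_end (f : nat -> R) : lapf f (nv p q).-1 = f (nv p q).-1 - f (nv p q).-2.
Proof.
rewrite (@lapf_seq f _ [:: (nv p q).-2]).
- by rewrite big_seq1.
- by [].
- by move=> j; rewrite !inE -!subn1 /adjn /nv; lia.
Qed.

Lemma lapf_eq_in {f g : nat -> R} {a} : (a < nv p q)%N ->
  (forall j, (j < nv p q)%N -> f j = g j) -> lapf f a = lapf g a.
Proof.
by move=> ha fg; apply: eq_big_nat => j /andP[_ hj]; rewrite !fg.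
Qed.

Definition is_eigfun (l : R) (f : nat -> R) :=
  forall a, (a < nv p q)%N -> lapf f a = l * f a.

Lemma laplacian_eigenP l (v : 'cV[R]_(nv p q)) :
  laplacian R p q *m v = l *: v <-> is_eigfun l (cvfun v).
Proof.
split=> [E a ha | E].
  have := congr1 (fun M : 'cV_(nv p q) => M (Ordinal ha) 0) E.
  by rewrite laplacian_mulmx mxE -cvfunE.
by apply/matrixP => i k; rewrite ord1 laplacian_mulmx E // mxE cvfunE.
Qed.

End Laplacian.

Lemma EK_mulmx {R : nzRingType} p q (v : 'cV[R]_(nv p q)) (m : 'I_(p - 2)) : (2 <= p)%N ->
  (EK R p q *m v) m 0 = cvfun v (p - 2) - cvfun v (p - 3 - m).
Proof.
move=> hp; have hm : (m.+2 < p)%N by have := ltn_ord m; lia.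
rewrite !mxE.
have vtxE (j : 'I_(nv p q)) (x : nat) :
    (x < p)%N -> (vtx j == - x%:Z) = (j == (p - 1 - x)%N :> nat).
  by move=> hx; rewrite /vtx; lia.
have -> : \sum_j EK R p q m j * v j 0 = \sum_(0 <= j < nv p q)
    ((if j == (p - 2)%N then cvfun v j else 0) - (if j == (p - 3 - m)%N then cvfun v j else 0)).
  rewrite big_mkord; apply: eq_bigr => j _ /=; rewrite !mxE (vtxE j 1%N) ?(vtxE j m.+2) //.
  have -> : (p - 1 - 1 = p - 2)%N by lia.
  have -> : (p - 1 - m.+2 = p - 3 - m)%N by lia.
  by rewrite mulrBl; do 2 case: (_ == _); rewrite ?mul1r ?mul0r ?cvfunE.
by rewrite sumrB !sum_nat_eq1 // /nv; lia.
Qed.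

Lemma in_EKperpP {R : fieldType} {p q} (v : 'cV[R]_(nv p q)) : (2 <= p)%N ->
  in_EKperp v <-> forall j, (j < p - 1)%N -> cvfun v j = cvfun v 0%N.
Proof.
move=> hp; split=> [hK | hconst].
  have f_eq j : (j < p - 1)%N -> cvfun v j = cvfun v (p - 2).
    move=> hj; have [-> // | ne] := eqVneq j (p - 2)%N.
    have hm : (p - 3 - j < p - 2)%N by lia.
    have := hK _ (row_sub (Ordinal hm) (EK R p q)).
    rewrite -row_mul => /(congr1 (fun M : 'M[R]_1 => M 0 0)).
    rewrite [LHS]mxE EK_mulmx // mxE => /eqP; rewrite subr_eq0 => /eqP ->.
    by congr cvfun; rewrite /=; lia.
  by move=> j hj; rewrite !f_eq //; lia.
move=> u /submxP[w ->]; rewrite -mulmxA.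
suff -> : EK R p q *m v = 0 by rewrite mulmx0.
apply/matrixP => m k; rewrite ord1 EK_mulmx // mxE !hconst ?subrr //; lia.
Qed.

Section CliqueConstantEigenfunction.
Context {R : realFieldType} {p q : nat} {l : R} {f : nat -> R}.
Hypotheses (hp : (2 <= p)%N) (hq : (2 <= q)%N) (hl : 4 < l)
  (f_clique : forall j, (j < p - 1)%N -> f j = f 0%N) (f_eig : is_eigfun p q l f).
Let hp1 : (1 <= p)%N := ltnW hp.

Lemma eigfun_path k : (k < q)%N -> f ((nv p q).-1 - k) = pathpol l k * f (nv p q).-1.
Proof.
suff path2 n : (n.+1 < q)%N -> f ((nv p q).-1 - n) = pathpol l n * f (nv p q).-1 /\
    f ((nv p q).-1 - n.+1) = pathpol l n.+1 * f (nv p q).-1.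
  by case: k => [|k] hk; [rewrite subn0 mul1r | case: (path2 k hk)].
elim: n => [|n IH] hn.
  have hend : ((nv p q).-1 < nv p q)%N by rewrite /nv; lia.
  have := f_eig _ hend; rewrite lapf_end //; try lia.
  by rewrite subn0 subn1 /= mul1r => e; split=> //; lra.
have [IH1 IH2] := IH (ltnW hn); split=> //.
set a := ((nv p q).-1 - n.+1)%N.
have ha : (a < nv p q)%N by rewrite /a /nv; lia.
have := f_eig _ ha; rewrite lapf_path //; try by rewrite /a /nv; lia.
have -> : a.-1 = ((nv p q).-1 - n.+2)%N by rewrite /a; lia.
have -> : a.+1 = ((nv p q).-1 - n)%N by rewrite /a /nv; lia.
by rewrite IH1 IH2 pathpolSS => e; lra.
Qed.

Lemma eigfun_clique_eq : f 0%N - f (p - 1)%N = l * f 0%N.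
Proof.
have h0 : (0 < nv p q)%N by rewrite /nv; lia.
by rewrite -f_eig // (lapf_clique _ _ hp1 hq _ f_clique) //; lia.
Qed.

Lemma eigfun_junction_val : f (p - 1)%N = pathpol l (q - 1) * f (nv p q).-1.
Proof. by rewrite -eigfun_path; [congr f; rewrite /nv | ]; lia. Qed.

Lemma eigfun_Fcf : f 0%N * Fcf p q l = 0.
Proof.
have [_ ratio] := pathpol_cfrac (q - 2) l hl.
have q_eq : ((q - 2).+1 = q - 1)%N by lia.
rewrite q_eq in ratio.
have fp : f p = cfrac (q - 1) l * f (p - 1)%N.
  rewrite eigfun_junction_val mulrA -ratio -eigfun_path; first by congr f; rewrite /nv; lia.
  lia.
have hj : (p - 1 < nv p q)%N by rewrite /nv; lia.
have := f_eig _ hj; rewrite (lapf_junction _ _ hp1 hq _ f_clique) fp -mulr_natr natrB //.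
have hb : f (p - 1)%N = (1 - l) * f 0%N by have := eigfun_clique_eq; lra.
rewrite hb /Fcf => junction; lra.
Qed.

Lemma eigfun_eq0 : f 0%N = 0 -> forall j, (j < nv p q)%N -> f j = 0.
Proof.
move=> a0; have b0 : f (p - 1)%N = 0 by have := eigfun_clique_eq; rewrite a0 mulr0; lra.
have [P_neq0 _] := pathpol_cfrac (q - 2) l hl.
have d0 : f (nv p q).-1 = 0.
  move/eqP: b0; rewrite eigfun_junction_val mulf_eq0 -[(q - 1)%N](_ : (q - 2).+1 = _) //; last lia.
  by rewrite (negbTE P_neq0) => /eqP.
move=> j hj; case: (ltnP j (p - 1)) => [/f_clique -> // | hj'].
have hk : ((nv p q).-1 - j < q)%N by rewrite /nv; lia.
by have := eigfun_path _ hk; rewrite subKn ?d0 ?mulr0 //; move: hj; rewrite /nv; lia.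
Qed.

End CliqueConstantEigenfunction.

(* The clique value [a] solves [a - pathpol l (q - 1) = l a]. *)
Definition root_eigfun {R : fieldType} p q (l : R) (j : nat) : R :=
  if (j < p - 1)%N then pathpol l (q - 1) / (1 - l) else pathpol l ((nv p q).-1 - j).

Lemma root_eigfun_eigen {R : realFieldType} p q (l : R) :
  (2 <= p)%N -> (2 <= q)%N -> 4 < l -> Fcf p q l = 0 -> is_eigfun p q l (root_eigfun p q l).
Proof.
move=> hp hq hl root; set g := root_eigfun p q l.
have hp1 : (1 <= p)%N by lia.
have l1 : 1 - l != 0 by rewrite ltr0_neq0 //; lra.
have g_clique j : (j < p - 1)%N -> g j = g 0%N.
  by move=> hj; rewrite /g /root_eigfun hj ifT //; lia.
have g_path j : (p - 1 <= j)%N -> g j = pathpol l ((nv p q).-1 - j).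
  by move=> hj; rewrite /g /root_eigfun ltnNge hj.
have g0 : g 0%N = pathpol l (q - 1) / (1 - l) by rewrite /g /root_eigfun ifT //; lia.
have g_junction : g (p - 1)%N = pathpol l (q - 1).
  by rewrite g_path //; congr pathpol; rewrite /nv; lia.
move=> a ha; have [a_clique | a_ge] := ltnP a (p - 1).
  rewrite (lapf_clique _ _ hp1 hq _ g_clique) // g_junction (g_clique _ a_clique) g0.
  by field.
have [-> | a_ne] := eqVneq a (p - 1)%N.
  have [_ ratio] := pathpol_cfrac (q - 2) l hl.
  rewrite (_ : (q - 2).+1 = q - 1)%N in ratio; last lia.
  rewrite (lapf_junction _ _ hp1 hq _ g_clique) g_junction (g_path p) ?g0; last lia.
  rewrite (_ : (nv p q).-1 - p = q - 2)%N ?ratio; last by rewrite /nv; lia.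
  rewrite -mulr_natr natrB //; apply/eqP; rewrite -subr_eq0; apply/eqP.
  transitivity (- g 0%N * Fcf p q l); last by rewrite root mulr0.
  by rewrite g0 /Fcf; field.
have [a_lt | a_end] := ltnP a.+1 (nv p q).
  rewrite lapf_path //; try lia.
  rewrite !g_path; try lia.
  have -> : ((nv p q).-1 - a.-1 = ((nv p q).-1 - a.+1).+2)%N by move: a_lt; rewrite /nv; lia.
  have -> : ((nv p q).-1 - a = ((nv p q).-1 - a.+1).+1)%N by move: a_lt; rewrite /nv; lia.
  by rewrite pathpolSS; ring.
have -> : a = (nv p q).-1 by move: ha a_end; rewrite /nv; lia.
rewrite lapf_end // !g_path; try by rewrite /nv; lia.
by rewrite subnn (_ : (nv p q).-1 - (nv p q).-2 = 1)%N /=; [ring | rewrite /nv; lia].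
Qed.

Lemma eigen_EKperpP {R : realFieldType} p q (l : R) : (2 <= p)%N -> (2 <= q)%N -> 4 < l ->
  (exists v : 'cV[R]_(nv p q), [/\ v != 0, laplacian R p q *m v = l *: v & in_EKperp v])
  <-> Fcf p q l = 0.
Proof.
move=> hp hq hl; have hp1 : (1 <= p)%N by lia.
split=> [[v [v_neq0 /(laplacian_eigenP _ _ hp1) v_eig /(in_EKperpP _ hp) v_clique]] | root].
  have /eqP := eigfun_Fcf hp hq hl v_clique v_eig; rewrite mulf_eq0 => /orP[/eqP v0 | /eqP //].
  by case/negP: v_neq0; apply/eqP/cvfun_eq0P; exact: (eigfun_eq0 hp hq hl v_clique v_eig v0).
set g := root_eigfun p q l; pose v := \col_(i < nv p q) g i.
have v_g j : (j < nv p q)%N -> cvfun v j = g j by exact: cvfun_col.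
have hend : ((nv p q).-1 < nv p q)%N by rewrite /nv; lia.
exists v; split.
- apply/eqP => /cvfun_eq0P /(_ _ hend).
  rewrite v_g // /g /root_eigfun ifF ?subnn /=; first exact/eqP/oner_neq0.
  by apply/negbTE; rewrite -leqNgt /nv; lia.
- apply/(laplacian_eigenP _ _ hp1) => a ha.
  rewrite (lapf_eq_in p q ha v_g) v_g //; exact: root_eigfun_eigen.
- apply/(in_EKperpP _ hp) => j hj.
  have [j_lt h0] : (j < nv p q)%N /\ (0 < p - 1)%N by rewrite /nv; lia.
  by rewrite !v_g ?(leq_ltn_trans (leq0n j) j_lt) // /g /root_eigfun hj h0.
Qed.

Section Continuity.
Context {R : realType}.

Lemma cfrac_continuous k (l : R) : 4 < l -> {for l, continuous (cfrac k)}.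
Proof.
move=> hl; elim: k => [|k IH]; first exact: cst_continuous.
have /andP[lb _] := cfrac_bound k l hl.
rewrite -[cfrac k.+1]/(fun x => (2 - x - cfrac k x)^-1).
apply: continuousV; first by rewrite ltr0_neq0 //; lra.
by apply: cvgB => //; apply: cvgB => //; exact: cvg_cst.
Qed.

Lemma Fcf_continuous p q (l : R) : 4 < l -> {for l, continuous (Fcf p q)}.
Proof.
move=> hl; apply: cvgD; last exact: cvg_cst.
by apply: cvgB; apply: cvgM; try exact: cfrac_continuous; apply: cvgB => //; exact: cvg_cst.
Qed.

Lemma Fcf_exists_root p q : (5 <= p)%N -> (2 <= q)%N ->
  exists2 l : R, p%:R < l <= p%:R + 2 & Fcf p q l = 0.
Proof.
move=> hp hq; have p5 : 5 <= p%:R :> R by rewrite (ler_nat R 5).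
have F_p : 0 < Fcf p q (p%:R : R) by apply: Fcf_gt0 => //; lra.
have F_p2 : Fcf p q (p%:R + 2 : R) < 0 by apply: Fcf_lt0 => //; lia.
have F_cont : {within `[p%:R, p%:R + 2], continuous (fun x : R => Fcf p q x)}%classic.
  apply: continuous_subspace_itv => x; rewrite in_itv /= => /andP[px _].
  by apply: Fcf_continuous; lra.
have p_le : p%:R <= p%:R + 2 :> R by lra.
have [|l] := @IVT R (Fcf p q) p%:R (p%:R + 2) 0 p_le F_cont.
  by rewrite ge_min le_max; apply/andP; split; apply/orP; [right|left]; lra.
rewrite in_itv /= => /andP[pl lp] root; exists l => //.
by rewrite lp andbT lt_neqAle pl andbT; apply: contra_eq_neq root => <-; rewrite gt_eqF.
Qed.

End Continuity.

Theorem proposition7 (R : realType) (p q : nat) (hp : (6 <= p)%N) (hq : (3 <= q)%N) :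
  (forall l : R, 4 < l ->
     ((exists v : 'cV[R]_(nv p q),
         [/\ v != 0, laplacian R p q *m v = l *: v & in_EKperp v])
      <-> Fq p q l = 0))
  /\ (exists l : R, [/\ p%:R < l, l <= p%:R + 2, Fq p q l = 0 &
        forall l' : R, p%:R < l' -> l' <= p%:R + 2 -> Fq p q l' = 0 -> l' = l])
  /\ (forall l : R, (4 < l <= p%:R) || (p%:R + 2 < l) -> Fq p q l != 0).
Proof.
have [p2 p5 q2] : [/\ 2 <= p, 5 <= p & 2 <= q]%N by split; lia.
have p6 : 6 <= p%:R :> R by rewrite (ler_nat R 6).
split; [|split].
- by move=> l hl; rewrite Fq_Fcf //; exact: eigen_EKperpP.
- have [l /andP[pl lp] root] := @Fcf_exists_root R p q p5 q2.
  exists l; split; rewrite ?Fq_Fcf //; try lra.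
  move=> l' pl' l'p; rewrite Fq_Fcf //; last lra.
  by move=> root'; apply: (Fcf_root_unique p q) => //; lra.
- move=> l /orP[/andP[hl lp] | lp]; rewrite Fq_Fcf //; try lra.
    by rewrite gt_eqF // Fcf_gt0 //; lra.
  by rewrite lt_eqF // Fcf_lt0 ?(ltW lp) //; lia.
Qed.
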